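(* Let $(\mathcal Q,d)$ be a metric space, $Y$ a $\mathcal Q$-valued random variable, $o\in\mathcal Q$, and $\tau\in\mathcal S_0^+$ with $\mathbb E[\tau'(d(Y,o))]<\infty$. Fix $p\in\mathcal Q$. (i) If $\operatorname{diam}(\mathcal Q)=\infty$, then $$\liminf_{r\to\infty}\inf_{q\in\mathcal Q\setminus B(o,r)}\frac{\mathbb E[\tau(d(Y,q))-\tau(d(Y,p))]}{\tau(d(q,p))}=\limsup_{r\to\infty}\sup_{q\in\mathcal Q\setminus B(o,r)}\frac{\mathbb E[\tau(d(Y,q))-\tau(d(Y,p))]}{\tau(d(q,p))}=1.$$ (ii) If $p$ is an accumulation point of $\mathcal Q$, then $$\limsup_{r\to0}\sup_{q\in B(p,r)\setminus\{p\}}\frac{\mathbb E[\tau(d(Y,q))-\tau(d(Y,p))]}{d(q,p)}\le\mathbb E[\tau'(d(Y,p))].$$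
   Context: $\mathcal S$ is the set of nondecreasing convex $\tau:[0,\infty)\to\mathbb R$, differentiable on $(0,\infty)$ with concave derivative $\tau'$, with $\tau'(0):=\lim_{x\searrow0}\tau'(x)$; $\mathcal S_0^+$ is the set of $\tau\in\mathcal S$ with $\tau(0)=0$ and $\tau'(x)>0$ for all $x>0$. $B(p,r):=\{q\in\mathcal Q: d(q,p)<r\}$ is the open ball and $\operatorname{diam}(\mathcal Q)=\sup_{q,p}d(q,p)$. $\mathcal Q$ carries its Borel $\sigma$-algebra. *)

From HB Require Import structures.
From mathcomp Require Import all_boot all_order all_algebra.
From mathcomp Require Import all_classical all_reals all_analysis.
Set Implicit Arguments. Unset Strict Implicit. Unset Printing Implicit Defensive.
Import Order.TTheory GRing.Theory Num.Theory.
Import numFieldNormedType.Exports.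
Local Open Scope classical_set_scope.
Local Open Scope ring_scope.

Section Defs.
Variable R : realType.

Definition is_metric (Q : Type) (d : Q -> Q -> R) : Prop :=
  [/\ (forall x y, 0 <= d x y),
      (forall x y, d x y = 0 <-> x = y),
      (forall x y, d x y = d y x) &
      (forall x y z, d x z <= d x y + d y z)].

Definition mball (Q : Type) (d : Q -> Q -> R) (p : Q) (r : R) : set Q :=
  [set q | d q p < r].

Definition mopen (Q : Type) (d : Q -> Q -> R) (A : set Q) : Prop :=
  forall x, A x -> exists2 r : R, 0 < r & mball d x r `<=` A.

Definition mborel (Q : Type) (d : Q -> Q -> R) : set (set Q) :=
  <<s mopen d >>.

Definition borel_rv (dO : measure_display) (Omega : measurableType dO)
  (Q : Type) (d : Q -> Q -> R) (Y : Omega -> Q) : Prop :=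
  forall A, mborel d A -> measurable (Y @^-1` A).

Definition diam (Q : Type) (d : Q -> Q -> R) : \bar R :=
  ereal_sup [set (d q p)%:E | q in setT & p in setT].

Definition accumulation_point (Q : Type) (d : Q -> Q -> R) (p : Q) : Prop :=
  forall r : R, 0 < r -> exists q, q <> p /\ d q p < r.

Definition tauD (tau : R -> R) (x : R) : R :=
  if 0 < x then derive1 tau x else lim (derive1 tau x @[x --> 0^'+]).

(* the class S : nondecreasing convex tau : [0,oo) -> R, differentiable on
   (0,oo) with concave derivative (values of tau outside [0,oo) irrelevant) *)
Definition in_S (tau : R -> R) : Prop :=
  [/\ (forall x y, 0 <= x -> x <= y -> tau x <= tau y),
      (forall x y t, 0 <= x -> 0 <= y -> 0 <= t <= 1 ->
          tau (t * x + (1 - t) * y) <= t * tau x + (1 - t) * tau y),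
      (forall x, 0 < x -> derivable tau x 1) &
      (forall x y t, 0 < x -> 0 < y -> 0 <= t <= 1 ->
          t * derive1 tau x + (1 - t) * derive1 tau y <= derive1 tau (t * x + (1 - t) * y))].

Definition in_S0p (tau : R -> R) : Prop :=
  [/\ in_S tau, tau 0 = 0 & (forall x, 0 < x -> 0 < derive1 tau x)].

End Defs.

From HB Require Import structures.
From mathcomp Require Import all_boot all_order all_algebra.
From mathcomp Require Import all_classical all_reals all_analysis.
From mathcomp Require Import ring lra.
From mathcomp Require Import measurable_realfun.
Import Order.TTheory GRing.Theory Num.Theory.
Import numFieldNormedType.Exports.
Local Open Scope classical_set_scope.
Local Open Scope ring_scope.
Set Implicit Arguments. Unset Strict Implicit. Unset Printing Implicit Defensive.

(* Write s = d(q,p), D = d(Y,p) and a = d(Y,q), so that |a - s| <= D.  Concavity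
   of tau' gives the growth bounds tau'(2x) <= 3 tau'(x) and s tau'(s) <= 6 tau(s),
   whence tau(a) - tau(D) = tau(s) (1 + O(1/s)) pointwise as s -> oo, while the
   ratio (tau(a) - tau(D)) / tau(s) stays below C (1 + tau'(d(Y,o))), which is
   integrable.  Dominated convergence along sequences q_n escaping to infinity
   gives (i).  Near p, tau(a) - tau(D) <= tau'(D + s) s, and tau' is right
   continuous and nondecreasing, so dominated convergence again gives (ii). *)

Section PositiveConcave.
Variables (R : realType) (g : R -> R).
Hypothesis g_gt0 : forall x, 0 < x -> 0 < g x.
Hypothesis g_concave : forall x y t, 0 < x -> 0 < y -> 0 <= t <= 1 ->
  t * g x + (1 - t) * g y <= g (t * x + (1 - t) * y).

Lemma pos_concave_nondecreasing x y : 0 < x -> x <= y -> g x <= g y.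
Proof.
move=> x0 xy; rewrite leNgt; apply/negP => gyx.
have y0 : 0 < y by apply: lt_le_trans xy.
have gx0 := g_gt0 x0.
set dl := g x - g y.
have dl0 : 0 < dl by rewrite subr_gt0.
have xlty : x < y by rewrite lt_neqAle xy andbT; apply: contraTneq gyx => ->; rewrite ltxx.
(* Choose z > y with y = t x + (1 - t) z where t := g x / (g x + dl): then
   t * g x > g y, whereas concavity and g z > 0 give g y > t * g x. *)
pose t := g x / (g x + dl).
pose z := x + (y - x) * (g x + dl) / dl.
have t1 : 1 - t = dl / (g x + dl) by rewrite /t; field; lra.
have z0 : 0 < z by rewrite /z addr_gt0 // divr_gt0 // mulr_gt0; lra.
have t01 : 0 <= t <= 1.
  by apply/andP; split; rewrite /t ?divr_ge0 ?ler_pdivrMr; lra.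
have := g_concave x0 z0 t01.
have -> : t * x + (1 - t) * z = y by rewrite t1 /t /z; field; lra.
have : 0 < (1 - t) * g z by rewrite t1 mulr_gt0 ?divr_gt0 ?g_gt0 //; lra.
have : g y - t * g x < 0.
  rewrite /t (_ : g y = g x - dl); last by rewrite /dl; ring.
  rewrite -(@ltr_pM2r _ (g x + dl)); last lra.
  rewrite mul0r mulrBl mulrAC divfK; [nra|lra].
lra.
Qed.

Lemma pos_concave_chord x K : 0 < x -> 0 <= K -> g (x + K) <= g x * (1 + 2 * K / x).
Proof.
move=> x0 K0; have x20 : 0 < x / 2 by apply: divr_gt0.
have xK0 : 0 < x + K by lra.
(* concavity between x / 2 and x + K, evaluated at x *)
pose t := K / (x / 2 + K).
have t01 : 0 <= t <= 1.
  by apply/andP; split; rewrite /t ?divr_ge0 ?ler_pdivrMr; lra.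
have := g_concave x20 xK0 t01.
have -> : t * (x / 2) + (1 - t) * (x + K) = x by rewrite /t; field; lra.
have -> : 1 - t = (x / 2) / (x / 2 + K) by rewrite /t; field; lra.
have tg : 0 <= t * g (x / 2) by rewrite mulr_ge0 ?(ltW (g_gt0 _)) //; case/andP: t01.
have -> : g x * (1 + 2 * K / x) = g x / ((x / 2) / (x / 2 + K)) by field; lra.
by rewrite ler_pdivlMr ?divr_gt0 //; lra.
Qed.

Lemma pos_concave_doubling x K : 0 < x -> 0 <= K <= x -> g (x + K) <= 3 * g x.
Proof.
move=> x0 /andP[K0 Kx]; apply: (le_trans (pos_concave_chord x0 K0)).
rewrite mulrC ler_wpM2r ?(ltW (g_gt0 _)) //.
have : K / x <= 1 by rewrite ler_pdivrMr // mul1r.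
lra.
Qed.

End PositiveConcave.

Lemma cvg_dnbhs_at_right (R : numFieldType) (T : topologicalType) (f : R -> T) (a : R) (l : T) :
  f x @[x --> a^'] --> l -> f x @[x --> a^'+] --> l.
Proof.
move=> fl U /fl; rewrite !nbhs_filterE /dnbhs /at_right /within /=.
by apply: filterS => u h au; apply: h; rewrite gt_eqF.
Qed.

Section ClassS0p.
Variables (R : realType) (tau : R -> R).
Hypothesis tauS : in_S0p tau.
Local Notation dtau := (tauD tau).

Lemma derive1_tau_gt0 x : 0 < x -> 0 < derive1 tau x.
Proof. by case: tauS => _ _; apply. Qed.

Lemma derive1_tau_concave x y t : 0 < x -> 0 < y -> 0 <= t <= 1 ->
  t * derive1 tau x + (1 - t) * derive1 tau y <= derive1 tau (t * x + (1 - t) * y).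
Proof. by case: tauS => -[_ _ _ h] _ _; apply: h. Qed.

Local Notation derive1_tau_le := (pos_concave_nondecreasing derive1_tau_gt0 derive1_tau_concave).

Lemma tau0 : tau 0 = 0.
Proof. by case: tauS. Qed.

Lemma tau_nondecreasing x y : 0 <= x -> x <= y -> tau x <= tau y.
Proof. by case: tauS => -[h _ _ _] _ _; exact: h. Qed.

Lemma tau_ge0 x : 0 <= x -> 0 <= tau x.
Proof. by move=> x0; rewrite -tau0; exact: tau_nondecreasing. Qed.

Lemma tauDE x : 0 < x -> dtau x = derive1 tau x.
Proof. by move=> x0; rewrite /tauD x0. Qed.

Lemma tauD_cvg0 : derive1 tau x @[x --> 0^'+] --> dtau 0.
Proof.
rewrite /tauD ltxx; apply: nondecreasing_at_right_is_cvgr.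
  by near=> b => u w /andP[u0 _] _ uw; exact: derive1_tau_le.
near=> b; exists 0 => _ [u /andP[u0 _] <-].
exact/ltW/derive1_tau_gt0.
Unshelve. all: by end_near. Qed.

Lemma tauD0_le x : 0 < x -> dtau 0 <= dtau x.
Proof.
move=> x0; rewrite (tauDE x0); apply: (cvgr_to_le tauD_cvg0); near=> y.
apply: derive1_tau_le; first by near: y; exact: nbhs_right_gt.
by apply/ltW; near: y; exact: nbhs_right_lt.
Unshelve. all: by end_near. Qed.

Lemma tauD_nondecreasing x y : 0 <= x -> x <= y -> dtau x <= dtau y.
Proof.
rewrite le_eqVlt => /predU1P[<-|x0 xy].
  by rewrite le_eqVlt => /predU1P[<-//|]; exact: tauD0_le.
have y0 : 0 < y by apply: lt_le_trans xy.
by rewrite !tauDE // derive1_tau_le.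
Qed.

Lemma tauD_ge0 x : 0 <= x -> 0 <= dtau x.
Proof.
move=> x0; apply: le_trans (tauD_nondecreasing (lexx 0) x0).
apply: (cvgr_to_ge tauD_cvg0); near=> y; apply/ltW/derive1_tau_gt0.
by near: y; exact: nbhs_right_gt.
Unshelve. all: by end_near. Qed.

Lemma tauD_doubling x K : 0 < x -> 0 <= K <= x -> dtau (x + K) <= 3 * dtau x.
Proof.
move=> x0 /andP[K0 Kx]; rewrite !tauDE //; last lra.
by apply: (pos_concave_doubling derive1_tau_gt0 derive1_tau_concave); rewrite ?K0.
Qed.

Lemma tauD_chord x K : 0 < x -> 0 <= K -> dtau (x + K) <= dtau x * (1 + 2 * K / x).
Proof.
move=> x0 K0; rewrite !tauDE //; last lra.
exact: (pos_concave_chord derive1_tau_gt0 derive1_tau_concave).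
Qed.

Lemma tauD_add_le a b : 0 <= a -> 0 <= b -> dtau (a + b) <= 3 * dtau a + 3 * dtau b.
Proof.
wlog ba : a b / b <= a.
  move=> H a0 b0; have [ba|/ltW ab] := leP b a; first exact: H.
  by rewrite addrC [X in _ <= X]addrC; apply: H.
move=> a0 b0; have Ga := tauD_ge0 a0; have Gb := tauD_ge0 b0.
have [a_gt0|a_le0] := ltP 0 a; last first.
  have [? ?] : a = 0 /\ b = 0 by split; lra.
  by subst a b; rewrite addr0; lra.
by have := tauD_doubling a_gt0 (_ : 0 <= b <= a); rewrite b0 ba; lra.
Qed.

Lemma tau_tangent a b : 0 <= a -> 0 < b -> tau b + dtau b * (a - b) <= tau a.
Proof.
move=> a0 b0; rewrite (tauDE b0).
have db : derivable tau b 1 by case: tauS => -[_ _ h _] _ _; exact: h.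
have dif := (derivable1_diffP tau b).1 db.
set v := a - b.
have Dv : 'D_v tau b = v * derive1 tau b by rewrite deriveE // diff1E.
have := cvg_dnbhs_at_right (diff_derivable (v := v) dif).
rewrite -/(derive tau b v) Dv => slope.
suff : v * derive1 tau b <= tau a - tau b by lra.
apply: (cvgr_to_le slope); near=> h.
have h0 : 0 < h by near: h; exact: nbhs_right_gt.
have h1 : h < 1 by near: h; exact: nbhs_right_lt.
rewrite /= /shift.
have -> : h *: v + b = h * a + (1 - h) * b by rewrite /v /GRing.scale /=; ring.
have convex_ab : tau (h * a + (1 - h) * b) <= h * tau a + (1 - h) * tau b.
  case: tauS => -[_ convex _ _] _ _; apply: convex => //; first exact: ltW.
  by rewrite !ltW.
by rewrite /GRing.scale /= mulrC ler_pdivrMr //; nra.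
Unshelve. all: by end_near. Qed.

Lemma tau_sub_le a b : 0 <= a -> a <= b -> tau b - tau a <= dtau b * (b - a).
Proof.
move=> a0 ab; have [b_gt0|b_le0] := ltP 0 b.
  by have := tau_tangent a0 b_gt0; lra.
have [? ?] : a = 0 /\ b = 0 by split; lra.
by subst a b; rewrite !subrr mulr0.
Qed.

Lemma tau_sub_ge a b : 0 < a -> a <= b -> dtau a * (b - a) <= tau b - tau a.
Proof. by move=> a0 ab; have := tau_tangent (le_trans (ltW a0) ab) a0; lra. Qed.

Lemma tauD_mul_le s : 0 < s -> s * dtau s <= 6 * tau s.
Proof.
move=> s0; have s2 : 0 < s / 2 by apply: divr_gt0.
have double : dtau s <= 3 * dtau (s / 2).
  have := tauD_doubling s2 (_ : 0 <= s / 2 <= s / 2).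
  by rewrite (ltW s2) lexx (_ : s / 2 + s / 2 = s) //; [apply|field].
have tangent : dtau (s / 2) * (s / 2) <= tau s - tau (s / 2).
  have := tau_sub_ge s2 (_ : s / 2 <= s).
  by rewrite (_ : s - s / 2 = s / 2); [apply; lra|field].
have := tau_ge0 (ltW s2); nra.
Qed.

Lemma tauD_gt0 x : 0 < x -> 0 < dtau x.
Proof. by move=> x0; rewrite tauDE // derive1_tau_gt0. Qed.

Lemma tau_gt0 s : 0 < s -> 0 < tau s.
Proof.
move=> s0; have := tauD_mul_le s0.
have : 0 < s * dtau s by rewrite mulr_gt0 ?tauD_gt0.
lra.
Qed.

Lemma tau_lipschitz a c M : 0 <= a -> 0 <= c -> a <= M -> c <= M ->
  `|tau a - tau c| <= dtau M * `|a - c|.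
Proof.
wlog ca : a c / c <= a.
  move=> H; have [|/ltW ac] := leP c a; first exact: H.
  by rewrite distrC [`|a - c|]distrC => *; apply: H.
move=> a0 c0 aM cM.
have := tau_sub_le c0 ca; have := tau_nondecreasing c0 ca.
have := tauD_nondecreasing (le_trans c0 ca) aM.
rewrite !ger0_norm ?subr_ge0 //; first nra.
by apply: tau_nondecreasing.
Qed.

Lemma tauD_right_cvg x : 0 <= x -> dtau y @[y --> x^'+] --> dtau x.
Proof.
rewrite le_eqVlt => /predU1P[<-|x0].
  apply: cvg_trans tauD_cvg0; apply: near_eq_cvg; near=> y.
  by rewrite tauDE //; near: y; exact: nbhs_right_gt.
pose k := 2 * dtau x / x.
apply: (@squeeze_cvgr _ _ _ _ (cst (dtau x)) (fun y => dtau x + k * (y - x))).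
- near=> y; have xy : x <= y by near: y; exact: nbhs_right_ge.
  rewrite (tauD_nondecreasing (ltW x0) xy) /=.
  have := tauD_chord x0 (_ : 0 <= y - x); rewrite subr_ge0 xy addrC subrK.
  by move/(_ isT)/le_trans; apply; rewrite le_eqVlt /k; apply/orP; left; apply/eqP; field; lra.
- exact: cvg_cst.
- apply: cvg_at_right_filter.
  rewrite -[X in _ --> X]addr0 -(mulr0 k) -(subrr x).
  apply: cvgD; first exact: cvg_cst.
  by apply: cvgMl_tmp; apply: cvgB => //; exact: cvg_cst.
Unshelve. all: by end_near. Qed.

Lemma tauD_cvg_harmonic x : 0 <= x -> dtau (x + harmonic n) @[n --> \oo] --> dtau x.
Proof.
move=> x0; apply: (cvg_at_rightP _ _ _).1 (tauD_right_cvg x0) _ _; split.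
  by move=> n; rewrite ltrDl harmonic_gt0.
rewrite -[X in _ --> X]addr0; apply: cvgD; [exact: cvg_cst|exact: cvg_harmonic].
Qed.

Lemma tauD_div_tau_le s : 0 < s -> dtau s / tau s <= 6 / s.
Proof.
move=> s0; have := tau_gt0 s0; have := tauD_mul_le s0.
by move=> h t0; rewrite ler_pdivrMr // mulrAC ler_pdivlMr // mulrC.
Qed.

Lemma div_tau_le s : 1 <= s -> s / tau s <= 6 / dtau 1.
Proof.
move=> s1; have s0 : 0 < s by lra.
have := tau_gt0 s0; have := tauD_gt0 ltr01.
have := tauD_mul_le s0; have := tauD_nondecreasing ler01 s1.
move=> h1 h2 d1 t0; rewrite ler_pdivrMr // mulrAC ler_pdivlMr //; nra.
Qed.

Lemma tau_sub_sub_le a D s : 0 <= a -> 0 <= D -> 0 < s -> `|a - s| <= D ->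
  `|tau a - tau D - tau s| <= 3 * dtau s * D + (3 * dtau D * D + tau D).
Proof.
move=> a0 D0 s0; rewrite ler_norml => /andP[asl asr].
have GD0 := tauD_ge0 D0; have Gs0 := tauD_ge0 (ltW s0).
have tD0 := tau_ge0 D0.
rewrite ler_norml; apply/andP; split.
  have [sa|/ltW as_] := leP s a.
    by have := tau_nondecreasing (ltW s0) sa; nra.
  have := tau_sub_le a0 as_.
  have : dtau s * (s - a) <= dtau s * D by apply: ler_wpM2l => //; lra.
  nra.
have := tau_nondecreasing a0 (_ : a <= s + D); move/(_ ltac:(lra)).
have := tau_sub_le (ltW s0) (_ : s <= s + D); move/(_ ltac:(lra)).
have := tauD_add_le (ltW s0) D0.
rewrite (_ : s + D - s = D); last by ring.
nra.
Qed.

Lemma ratio_sub1_le a D s : 0 <= a -> 0 <= D -> 1 <= s -> `|a - s| <= D ->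
  `|(tau a - tau D) / tau s - 1| <=
    (18 * D + 6 * (3 * dtau D * D + tau D) / dtau 1) / s.
Proof.
move=> a0 D0 s1 asD; have s0 : 0 < s by lra.
have t0 := tau_gt0 s0; have G10 := tauD_gt0 ltr01.
set Z := 3 * dtau D * D + tau D.
have Z0 : 0 <= Z.
  by have := tauD_ge0 D0; have := tau_ge0 D0; rewrite /Z; nra.
have -> : (tau a - tau D) / tau s - 1 = (tau a - tau D - tau s) / tau s.
  by field; lra.
rewrite normrM normfV (gtr0_norm t0).
have it0 : 0 <= (tau s)^-1 by rewrite invr_ge0 ltW.
apply: le_trans (ler_wpM2r it0 (tau_sub_sub_le a0 D0 s0 asD)) _.
have -> : (3 * dtau s * D + Z) / tau s = 3 * D * (dtau s / tau s) + Z / s * (s / tau s).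
  by field; lra.
have -> : (18 * D + 6 * Z / dtau 1) / s = 3 * D * (6 / s) + Z / s * (6 / dtau 1).
  by field; lra.
apply: lerD; apply: ler_wpM2l.
- by rewrite mulr_ge0.
- exact: tauD_div_tau_le.
- by rewrite divr_ge0 // ltW.
- exact: div_tau_le.
Qed.

Lemma ratio_abs_le a D s : 0 <= a -> 0 <= D -> 1 <= s -> `|a - D| <= s ->
  `|(tau a - tau D) / tau s| <= 18 + 18 * dtau D / dtau 1.
Proof.
move=> a0 D0 s1 aDs; have s0 : 0 < s by lra.
have t0 := tau_gt0 s0; have G10 := tauD_gt0 ltr01.
have GD0 := tauD_ge0 D0; have Gs0 := tauD_ge0 (ltW s0).
have GDs0 : 0 <= dtau (D + s) by apply: tauD_ge0; lra.
have lip : `|tau a - tau D| <= (3 * dtau D + 3 * dtau s) * s.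
  have aM : a <= D + s by move: aDs; rewrite ler_norml; lra.
  apply: le_trans (tau_lipschitz a0 D0 aM (_ : D <= D + s)) _; first lra.
  apply: le_trans (ler_wpM2l GDs0 aDs) _.
  by apply: ler_wpM2r (tauD_add_le D0 (ltW s0)); rewrite ltW.
rewrite normrM normfV (gtr0_norm t0).
have it0 : 0 <= (tau s)^-1 by rewrite invr_ge0 ltW.
apply: le_trans (ler_wpM2r it0 lip) _.
have -> : (3 * dtau D + 3 * dtau s) * s / tau s =
    3 * dtau D * (s / tau s) + 3 * s * (dtau s / tau s).
  by field; lra.
have -> : 18 + 18 * dtau D / dtau 1 = 3 * dtau D * (6 / dtau 1) + 3 * s * (6 / s).
  by field; lra.
apply: lerD; apply: ler_wpM2l.
- by rewrite mulr_ge0.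
- exact: div_tau_le.
- by rewrite mulr_ge0 // ltW.
- exact: tauD_div_tau_le.
Qed.

Lemma ratio_cvg1 (a s : R^nat) (D : R) : 0 <= D -> (forall n, 0 <= a n) ->
  (forall n, n.+1%:R <= s n) -> (forall n, `|a n - s n| <= D) ->
  (tau (a n) - tau D) / tau (s n) @[n --> \oo] --> (1 : R).
Proof.
move=> D0 a0 sn aD.
set C := 18 * D + 6 * (3 * dtau D * D + tau D) / dtau 1.
have C0 : 0 <= C.
  have := tauD_ge0 D0; have := tau_ge0 D0; have := tauD_gt0 ltr01.
  move=> G10 tD0 GD0; rewrite /C addr_ge0 ?divr_ge0 //; [lra|nra|lra].
have s1 n : 1 <= s n by apply: le_trans (sn n); rewrite ler1n.
have : C * harmonic n @[n --> \oo] --> 0.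
  by rewrite -(mulr0 C); exact: cvgMl_tmp cvg_harmonic.
move/cvgrPdist_le => Ch; apply/cvgrPdist_le => e /Ch; apply: filterS => n.
rewrite sub0r normrN ger0_norm ?mulr_ge0 //= distrC; apply: le_trans.
apply: le_trans (ratio_sub1_le (a0 n) D0 (s1 n) (aD n)) _.
by rewrite ler_wpM2l // lef_pV2 ?posrE ?ltr0n //; apply: lt_le_trans (s1 n).
Qed.

End ClassS0p.

Section Metric.
Variables (R : realType) (Q : Type) (d : Q -> Q -> R).
Hypothesis dm : is_metric d.

Lemma is_metric_ge0 x y : 0 <= d x y. Proof. by case: dm. Qed.
Lemma is_metric_sym x y : d x y = d y x. Proof. by case: dm. Qed.
Lemma is_metric_triangle x y z : d x z <= d x y + d y z. Proof. by case: dm. Qed.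

Lemma is_metric_gt0 x y : x <> y -> 0 < d x y.
Proof.
move=> xy; rewrite lt_neqAle is_metric_ge0 andbT eq_sym.
by case: dm => _ eq0 _ _; apply/eqP => /eq0.
Qed.

Lemma is_metric_dist_sub_le x y z : `|d x y - d x z| <= d y z.
Proof.
have := is_metric_triangle x z y; have := is_metric_triangle x y z.
by rewrite (is_metric_sym z y) ler_norml; lra.
Qed.

Lemma mopen_dist_gt q r : mopen d [set x | r < d x q].
Proof.
move=> x /= rx; exists (d x q - r); first by rewrite subr_gt0.
move=> z; rewrite /mball /= => hz.
by have := is_metric_triangle x z q; rewrite (is_metric_sym x z); lra.
Qed.

Lemma diam_infty_unbounded o : diam d = +oo%E -> forall r : R, exists q, r <= d q o.
Proof.
move=> dinf r; apply: contrapT => /forallNP bounded.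
have lt_r q : d q o < r by rewrite ltNge; apply/negP; exact: bounded.
suff : (diam d <= (2 * r)%:E)%E by rewrite dinf leye_eq.
apply: ge_ereal_sup => _ [q _ [q' _ <-]]; rewrite lee_fin.
have := is_metric_triangle q o q'; have := lt_r q; have := lt_r q'.
by rewrite (is_metric_sym q' o); lra.
Qed.

Variables (dO : measure_display) (Omega : measurableType dO) (Y : Omega -> Q).
Hypothesis Yrv : borel_rv d Y.

Lemma measurable_dist q : measurable_fun setT (fun w => d (Y w) q).
Proof.
apply: (measurability (@RGenOInfty.G R)) => [|/= _ [_] [r] -> <-].
  exact: RGenOInfty.measurableE.
rewrite setTI (_ : _ @^-1` _ = Y @^-1` [set x | r < d x q]).
  by apply: Yrv; apply: sub_sigma_algebra; exact: mopen_dist_gt.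
by apply/seteqP; split => w /=; rewrite in_itv /= andbT.
Qed.

Lemma measurable_nondecreasing_dist (f : R -> R) q :
  (forall x y, 0 <= x -> x <= y -> f x <= f y) ->
  measurable_fun setT (fun w => f (d (Y w) q)).
Proof.
move=> fnd.
have -> : (fun w => f (d (Y w) q)) = (fun x => f (Num.max x 0)) \o (fun w => d (Y w) q).
  by apply/funext => w /=; rewrite max_l // is_metric_ge0.
apply: measurableT_comp; last exact: measurable_dist.
apply: nondecreasing_measurable => // x y xy.
apply: fnd; first by rewrite le_max lexx orbT.
by rewrite ge_max !le_max xy lexx orbT.
Qed.

End Metric.

Section LimitsOutsideBalls.
Variables (R : realType) (Q : Type) (d : Q -> Q -> R) (o : Q) (f : Q -> \bar R).
Hypothesis unbounded : forall r : R, exists q, r <= d q o.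
Hypothesis near_one : forall e : R, 0 < e -> exists r0 : R,
  forall q, r0 <= d q o -> ((1 - e)%:E <= f q <= (1 + e)%:E)%E.

Let mball_compl r : ~` mball d o r = [set q | r <= d q o].
Proof. by apply/seteqP; split => q; rewrite /mball /= leNgt => /negP. Qed.

Lemma limf_einf_outside_balls :
  limf_einf (fun r : R => ereal_inf (f @` (~` mball d o r))) (pinfty_nbhs R) = 1%E.
Proof.
rewrite limf_einfE; apply/eqP; rewrite eq_le; apply/andP; split.
  apply: ge_ereal_sup => _ [V FV <-]; apply/lee_addgt0Pr => e e0.
  have [r0 fr0] := near_one e0.
  have [r r0r Vr] := pinfty_ex_gt (num_real r0) FV.
  have [q qr] := unbounded r.
  apply: ge_ereal_inf; exists (ereal_inf (f @` (~` mball d o r))); first by exists r.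
  apply: ge_ereal_inf; exists (f q); first by exists q; rewrite ?mball_compl.
  by have /andP[_] := fr0 q (le_trans (ltW r0r) qr); rewrite EFinD.
apply/lee_subgt0Pr => e e0; have [r0 fr0] := near_one e0.
apply: le_ereal_sup_tmp.
exists (ereal_inf ((fun r => ereal_inf (f @` (~` mball d o r))) @` [set r | r0 < r])).
  by exists [set r | r0 < r] => //; exists r0; split => //; exact: num_real.
apply: le_ereal_inf_tmp => _ [r r0r <-].
apply: le_ereal_inf_tmp => _ [q + <-]; rewrite mball_compl /= => qr.
by have /andP[+ _] := fr0 q (le_trans (ltW r0r) qr); rewrite EFinB.
Qed.

Lemma limf_esup_outside_balls :
  limf_esup (fun r : R => ereal_sup (f @` (~` mball d o r))) (pinfty_nbhs R) = 1%E.
Proof.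
rewrite limf_esupE; apply/eqP; rewrite eq_le; apply/andP; split.
  apply/lee_addgt0Pr => e e0; have [r0 fr0] := near_one e0.
  apply: ge_ereal_inf.
  exists (ereal_sup ((fun r => ereal_sup (f @` (~` mball d o r))) @` [set r | r0 < r])).
    by exists [set r | r0 < r] => //; exists r0; split => //; exact: num_real.
  apply: ge_ereal_sup => _ [r r0r <-].
  apply: ge_ereal_sup => _ [q + <-]; rewrite mball_compl /= => qr.
  by have /andP[_] := fr0 q (le_trans (ltW r0r) qr); rewrite EFinD.
apply: le_ereal_inf_tmp => _ [V FV <-]; apply/lee_subgt0Pr => e e0.
have [r0 fr0] := near_one e0.
have [r r0r Vr] := pinfty_ex_gt (num_real r0) FV.
have [q qr] := unbounded r.
apply: le_ereal_sup_tmp; exists (ereal_sup (f @` (~` mball d o r))); first by exists r.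
apply: le_ereal_sup_tmp; exists (f q); first by exists q; rewrite ?mball_compl.
by have /andP[+ _] := fr0 q (le_trans (ltW r0r) qr); rewrite EFinB.
Qed.

End LimitsOutsideBalls.

Section ExcessRisk.
Variables (R : realType) (dO : measure_display) (Omega : measurableType dO)
  (P : probability Omega R) (Q : Type) (d : Q -> Q -> R) (Y : Omega -> Q)
  (o p : Q) (tau : R -> R).
Hypotheses (dm : is_metric d) (Yrv : borel_rv d Y) (tauS : in_S0p tau)
  (tauD_o_fin : (\int[P]_w (tauD tau (d (Y w) o))%:E < +oo)%E).
Local Notation dtau := (tauD tau).

Lemma measurable_tau_dist q : measurable_fun setT (fun w => tau (d (Y w) q)).
Proof. exact: (measurable_nondecreasing_dist dm Yrv q (tau_nondecreasing tauS)). Qed.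

Lemma measurable_tauD_dist_add q (c : R) : 0 <= c ->
  measurable_fun setT (fun w => dtau (d (Y w) q + c)).
Proof.
move=> c0; apply: (measurable_nondecreasing_dist dm Yrv q (f := fun x => dtau (x + c))).
by move=> x y x0 xy; apply: (tauD_nondecreasing tauS); lra.
Qed.

Lemma integrable_tauD_dist_o : P.-integrable setT (fun w => (dtau (d (Y w) o))%:E).
Proof.
have mG : measurable_fun setT (fun w => dtau (d (Y w) o)).
  exact: (measurable_nondecreasing_dist dm Yrv o (tauD_nondecreasing tauS)).
apply/integrableP; split; first exact/measurable_EFinP.
rewrite (eq_integral (fun w => (dtau (d (Y w) o))%:E)) //.
by move=> w _ /=; rewrite ger0_norm // (tauD_ge0 tauS) // is_metric_ge0.
Qed.

Lemma integrable_affine_tauD_dist_o k1 k2 :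
  P.-integrable setT (fun w => (k1 * dtau (d (Y w) o) + k2)%:E).
Proof.
rewrite (_ : (fun w => _) =
    (fun w => k1%:E * (dtau (d (Y w) o))%:E)%E \+ (EFin \o cst k2)).
  apply: integrableD => //; first exact/integrableZl/integrable_tauD_dist_o.
  exact: finite_measure_integrable_cst.
by apply/funext => w /=; rewrite EFinD EFinM.
Qed.

Lemma integrable_dominated (f : Omega -> R) k1 k2 : measurable_fun setT f ->
  (forall w, `|f w| <= k1 * dtau (d (Y w) o) + k2) ->
  P.-integrable setT (EFin \o f).
Proof.
move=> mf fb; apply: le_integrable (integrable_affine_tauD_dist_o k1 k2) => //.
  exact/measurable_EFinP.
by move=> w _ /=; rewrite lee_fin (le_trans (fb w)) // ler_norm.
Qed.

Lemma tauD_dist_add_le x c : 0 <= c ->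
  dtau (d x p + c) <= 3 * dtau (d x o) + 3 * dtau (d o p + c).
Proof.
move=> c0; have d0 := is_metric_ge0 dm.
have op_c0 : 0 <= d o p + c by rewrite addr_ge0.
apply: le_trans (tauD_add_le tauS (d0 _ _) op_c0).
apply: (tauD_nondecreasing tauS); first by rewrite addr_ge0.
by have := is_metric_triangle dm x o p; lra.
Qed.

Local Notation excess q := (\int[P]_w (tau (d (Y w) q) - tau (d (Y w) p))%:E)%E.

Lemma tau_dist_sub_le q w : `|tau (d (Y w) q) - tau (d (Y w) p)| <=
  dtau (d (Y w) p + d q p) * d q p.
Proof.
have d0 := is_metric_ge0 dm.
have := is_metric_dist_sub_le dm (Y w) q p; rewrite ler_norml => /andP[_ qp].
have pM : d (Y w) p <= d (Y w) p + d q p by rewrite lerDl.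
have qM : d (Y w) q <= d (Y w) p + d q p by lra.
apply: le_trans (tau_lipschitz tauS (d0 _ _) (d0 _ _) qM pM) _.
by rewrite ler_wpM2l ?(tauD_ge0 tauS) ?addr_ge0 // is_metric_dist_sub_le.
Qed.

Lemma integrable_tau_dist_sub q :
  P.-integrable setT (fun w => (tau (d (Y w) q) - tau (d (Y w) p))%:E).
Proof.
have d0 := is_metric_ge0 dm.
apply: (integrable_dominated (k1 := 3 * d q p) (k2 := 3 * dtau (d o p + d q p) * d q p)) => //.
  exact: measurable_funB (measurable_tau_dist q) (measurable_tau_dist p).
move=> w; apply: le_trans (tau_dist_sub_le q w) _.
by rewrite mulrAC -mulrDl ler_wpM2r ?d0 // tauD_dist_add_le.
Qed.

Lemma integrable_tauD_dist_add r : 0 <= r ->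
  P.-integrable setT (fun w => (dtau (d (Y w) p + r))%:E).
Proof.
move=> r0; apply: (integrable_dominated (k1 := 3) (k2 := 3 * dtau (d o p + r))) => //.
  exact: measurable_tauD_dist_add.
move=> w; rewrite ger0_norm; first exact: tauD_dist_add_le.
by apply: (tauD_ge0 tauS); rewrite addr_ge0 // is_metric_ge0.
Qed.

Lemma excess_div_dist_le q : 0 < d q p ->
  (excess q * ((d q p)^-1)%:E <= \int[P]_w (dtau (d (Y w) p + d q p))%:E)%E.
Proof.
move=> s0; have s_ge0 := ltW s0.
have : (excess q <= \int[P]_w ((dtau (d (Y w) p + d q p))%:E * (d q p)%:E))%E.
  apply: le_integral => //; first exact: integrable_tau_dist_sub.
    exact/integrableZr/integrable_tauD_dist_add.
  by move=> w _; rewrite -EFinM lee_fin (le_trans (ler_norm _) (tau_dist_sub_le q w)).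
rewrite integralZr //; last exact: integrable_tauD_dist_add.
move/(lee_wpmul2r (x := ((d q p)^-1)%:E)); rewrite lee_fin invr_ge0 => /(_ s_ge0).
by rewrite -muleA -EFinM mulfV ?gt_eqF // mule1.
Qed.

Lemma le_integral_tauD_dist_add r1 r2 : 0 <= r1 -> r1 <= r2 ->
  (\int[P]_w (dtau (d (Y w) p + r1))%:E <= \int[P]_w (dtau (d (Y w) p + r2))%:E)%E.
Proof.
move=> r10 r12; have d0 w := is_metric_ge0 dm (Y w) p.
apply: ge0_le_integral => //.
- by move=> w _; rewrite lee_fin (tauD_ge0 tauS) // addr_ge0.
- exact/measurable_EFinP/measurable_tauD_dist_add.
- by apply/measurable_EFinP/measurable_tauD_dist_add; lra.
- by move=> w _; rewrite lee_fin (tauD_nondecreasing tauS) ?addr_ge0 ?lerD2l.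
Qed.

Lemma integral_tauD_dist_harmonic_cvg :
  (\int[P]_w (dtau (d (Y w) p + harmonic n))%:E)%E @[n --> \oo] -->
  (\int[P]_w (dtau (d (Y w) p))%:E)%E.
Proof.
have d0 w := is_metric_ge0 dm (Y w) p.
have mf n : measurable_fun setT (fun w => (dtau (d (Y w) p + harmonic n))%:E).
  exact/measurable_EFinP/measurable_tauD_dist_add/harmonic_ge0.
have mf0 : measurable_fun setT (fun w => (dtau (d (Y w) p))%:E).
  apply/measurable_EFinP; under eq_fun do rewrite -[d _ p]addr0.
  exact: measurable_tauD_dist_add.
have cvg_pt : {ae P, forall w, setT w ->
    (dtau (d (Y w) p + harmonic n))%:E @[n --> \oo] --> (dtau (d (Y w) p))%:E}.
  apply: aeW => w _; apply: cvg_EFin; first exact: nearW.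
  exact: (tauD_cvg_harmonic tauS).
have dom : {ae P, forall w n, setT w -> `|(dtau (d (Y w) p + harmonic n))%:E| <=
    (3 * dtau (d (Y w) o) + 3 * dtau (d o p + 1))%:E}%E.
  apply: aeW => w n _ /=; rewrite lee_fin ger0_norm ?(tauD_ge0 tauS) ?addr_ge0 //.
  apply: le_trans (tauD_dist_add_le _ ler01).
  by rewrite (tauD_nondecreasing tauS) ?addr_ge0 // lerD2l invf_le1 ?ler1n.
have idom := integrable_affine_tauD_dist_o 3 (3 * dtau (d o p + 1)).
by have [] := dominated_convergence measurableT mf mf0 cvg_pt idom dom.
Qed.

Lemma limsup_excess_div_dist_le :
  (limf_esup
     (fun r : R => ereal_sup ((fun q => (excess q * ((d q p)^-1)%:E)%E)
                                 @` (mball d p r `\ p)))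
     (0%R^'+)
   <= \int[P]_w (dtau (d (Y w) p))%:E)%E.
Proof.
apply: (cvge_to_ge integral_tauD_dist_harmonic_cvg); apply: nearW => n.
set V := [set r : R | 0 < r < harmonic n].
have V0 : (0:R)^'+ V.
  near=> r; apply/andP; split; near: r; first exact: nbhs_right_gt.
  exact: nbhs_right_lt (harmonic_gt0 n).
rewrite limf_esupE; apply: ge_ereal_inf; exists (ereal_sup
  ((fun r => ereal_sup ((fun q => (excess q * ((d q p)^-1)%:E)%E) @` (mball d p r `\ p))) @` V)).
  by exists V.
apply: ge_ereal_sup => _ [r /andP[r0 rn] <-].
apply: ge_ereal_sup => _ [q [qr qp] <-].
have s0 : 0 < d q p by apply: is_metric_gt0.
apply: le_trans (excess_div_dist_le s0) (le_integral_tauD_dist_add _ _).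
  exact: is_metric_ge0.
by rewrite /mball /= in qr; exact: ltW (lt_trans qr rn).
Unshelve. all: by end_near. Qed.

Local Notation ratio q w := ((tau (d (Y w) q) - tau (d (Y w) p)) / tau (d q p)).

Lemma excess_div_tau q :
  (excess q * ((tau (d q p))^-1)%:E = \int[P]_w (ratio q w)%:E)%E.
Proof. by rewrite -integralZr //; exact: integrable_tau_dist_sub. Qed.

Lemma excess_ratio_cvg1 (qn : Q^nat) : (forall n, n.+1%:R <= d (qn n) p) ->
  (excess (qn n) * ((tau (d (qn n) p))^-1)%:E)%E @[n --> \oo] --> 1%E.
Proof.
move=> far; have d0 := is_metric_ge0 dm.
have s1 n : 1 <= d (qn n) p by apply: le_trans (far n); rewrite ler1n.
under eq_fun do rewrite excess_div_tau.
have mf n : measurable_fun setT (fun w => (ratio (qn n) w)%:E).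
  apply/measurable_EFinP/measurable_funM; last exact: measurable_cst.
  by apply: measurable_funB; exact: measurable_tau_dist.
have cvg_pt : {ae P, forall w, setT w -> (ratio (qn n) w)%:E @[n --> \oo] --> 1%E}.
  apply: aeW => w _; apply: cvg_EFin; first exact: nearW.
  apply: (ratio_cvg1 tauS) => // n.
  by rewrite (is_metric_sym dm (Y w)) is_metric_dist_sub_le.
set k2 := 18 + 54 * dtau (d o p) / dtau 1.
have dom : {ae P, forall w n, setT w ->
    `|(ratio (qn n) w)%:E| <= (54 / dtau 1 * dtau (d (Y w) o) + k2)%:E}%E.
  apply: aeW => w n _ /=; rewrite lee_fin.
  apply: le_trans (ratio_abs_le tauS (d0 _ _) (d0 _ _) (s1 n) _) _.
    exact: is_metric_dist_sub_le.
  have := tauD_dist_add_le (Y w) (lexx 0); rewrite !addr0 => GD.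
  have G10 := tauD_gt0 tauS ltr01.
  suff : 18 * dtau (d (Y w) p) / dtau 1 <=
      (54 * dtau (d (Y w) o) + 54 * dtau (d o p)) / dtau 1.
    rewrite /k2 (_ : (54 * _ + _) / _ = 54 / dtau 1 * dtau (d (Y w) o) + 54 * dtau (d o p) / dtau 1).
      by lra.
    by field; lra.
  by rewrite ler_pM2r ?invr_gt0 //; lra.
have mf1 : measurable_fun setT (fun w : Omega => (1 : R)%:E) by exact: measurable_cst.
have [_ _] := dominated_convergence measurableT mf mf1 cvg_pt
  (integrable_affine_tauD_dist_o _ _) dom.
suff -> : (\int[P]_(w in setT) (1 : R)%:E = 1)%E by [].
by rewrite integral_cst // mul1e; exact: probability_setT.
Qed.

Lemma excess_ratio_near1 e : 0 < e -> exists r0 : R, forall q, r0 <= d q o ->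
  ((1 - e)%:E <= excess q * ((tau (d q p))^-1)%:E <= (1 + e)%:E)%E.
Proof.
move=> e0; apply: contrapT => /forallNP far_bad.
have bad_at n : exists q, n.+1%:R + d o p <= d q o /\
    ~ ((1 - e)%:E <= excess q * ((tau (d q p))^-1)%:E <= (1 + e)%:E)%E.
  have /existsNP[q /not_implyP bad] := far_bad (n.+1%:R + d o p).
  by exists q.
have [qn qn_bad] := choice bad_at.
have far n : n.+1%:R <= d (qn n) p.
  have [+ _] := qn_bad n; have := is_metric_triangle dm (qn n) p o.
  by rewrite (is_metric_sym dm p o); lra.
have cv := excess_ratio_cvg1 far.
have [n [fin_n close_n]] : exists n,
    (excess (qn n) * ((tau (d (qn n) p))^-1)%:E)%E \is a fin_num /\
    `|1 - fine (excess (qn n) * ((tau (d (qn n) p))^-1)%:E)%E| < e.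
  near \oo => n; exists n; split; near: n; first exact: cvg_is_fine cv.
  by move/fine_cvgP: cv => [_ /cvgrPdist_lt /(_ e e0)].
have [_] := qn_bad n; apply; rewrite -(fineK fin_n) !lee_fin.
by move: close_n; rewrite ltr_norml => /andP[? ?]; apply/andP; split; lra.
Unshelve. all: by end_near. Qed.

End ExcessRisk.

Theorem mainTheorem4 (R : realType) (dO : measure_display)
  (Omega : measurableType dO) (P : probability Omega R)
  (Q : Type) (d : Q -> Q -> R) (Y : Omega -> Q) (o p : Q) (tau : R -> R) :
  is_metric d ->
  borel_rv d Y ->
  in_S0p tau ->
  (\int[P]_w (tauD tau (d (Y w) o))%:E < +oo)%E ->
  let Ediff := fun q : Q =>
    (\int[P]_w (tau (d (Y w) q) - tau (d (Y w) p))%:E)%E in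
  (diam d = +oo%E ->
     let ratio := fun q : Q => (Ediff q * ((tau (d q p))^-1)%:E)%E in
     limf_einf (fun r : R => ereal_inf (ratio @` (~` mball d o r))) (pinfty_nbhs R) = 1%E /\
     limf_esup (fun r : R => ereal_sup (ratio @` (~` mball d o r))) (pinfty_nbhs R) = 1%E) /\
  (accumulation_point d p ->
     (limf_esup
        (fun r : R => ereal_sup ((fun q => (Ediff q * ((d q p)^-1)%:E)%E)
                                   @` (mball d p r `\ p)))
        (0%R^'+)
      <= \int[P]_w (tauD tau (d (Y w) p))%:E)%E).
Proof.
(* (ii) holds at isolated points as well, where the suprema are over empty sets. *)
move=> dm Yrv tauS tauD_o_fin Ediff; split=> [dinf ratio|_].
  have unbounded := diam_infty_unbounded dm o dinf.
  have near1 := excess_ratio_near1 p dm Yrv tauS tauD_o_fin.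
  by split; [exact: limf_einf_outside_balls near1|exact: limf_esup_outside_balls near1].
exact: limsup_excess_div_dist_le dm Yrv tauS tauD_o_fin.
Qed.
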